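(* Fix an integer $k\ge2$ and let $w,\sigma=w^{-1},\widetilde w$ be as in the context. Let $l\in\{0,\dots,n\}$ and let $I$ be an interval carrying $w_{n-l}$. Then for every $m\in\{0,\dots,k-2\}$, $$\int_{I_m}(\widetilde w)^2\sigma\le 30\,p^2\,w(I_m).$$
   Context: All intervals are half-open, $[a,b)$; $w(E)=\int_E w$. Fix an integer $k\ge2$, $\varepsilon=3^{-k}$, $p=\frac{1}{3\varepsilon}\Big(\frac{1+\varepsilon}{2}+\frac{4\varepsilon^2}{1+\varepsilon}\Big)$, $u=\sqrt p+\sqrt{p-1}$. For an interval $I$: $I_\pm$ its left/right halves; $I_m$ ($0\le m\le k-1$) the interval with the same right endpoint as $I$ and length $3^{-m}|I|$; $J^{(i)}$ ($i=1,2,3$) the $i$-th from the left of the three equal thirds of $J$. For $\omega\sigma=p$: $w_0(\omega,\sigma,I)=\frac{\omega}{\sqrt p}(u\chi_{I_-}+u^{-1}\chi_{I_+})$ and, for $\nu\ge1$, $w_\nu(\omega,\sigma,I)=\frac{\omega}{p}\big(\sum_{m=0}^{k-2}\chi_{I_m^{(1)}}+\chi_{I_{k-1}^{(1)}\cup I_{k-1}^{(2)}}+\frac{4\varepsilon}{1+\varepsilon}\chi_{I_{k-1}^{(3)}}\big)+\sum_{m=0}^{k-2}w_{\nu-1}(2\omega,\frac\sigma2,I_m^{(2)})$. Let $n=3^{k-1}$, let $w$ be the $1$-periodic extension of $w_n(1,p,[0,1))$ to $\mathbb R$, and $\sigma=w^{-1}$. Carrying: each $[j,j+1)$, $j\in\mathbb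 Z$, carries $w_n$; if $I$ carries $w_\nu$ with $\nu\ge1$, then each $I_m^{(2)}$, $0\le m\le k-2$, carries $w_{\nu-1}$. $\operatorname{supp}w_\nu$ is the union of all intervals carrying $w_\nu$. $\widetilde w=\sum_{l=1}^n2^l\chi_{\operatorname{supp}w_{n-(l-1)}\setminus\operatorname{supp}w_{n-l}}+2^{n+1}\chi_{\operatorname{supp}w_0}$. *)

From Stdlib Require Import Reals ZArith ClassicalEpsilon.
Open Scope R_scope.

(* A half-open interval [lo, hi). *)
Record intv := mkI { lo : R; hi : R }.

Definition inI (I : intv) (x : R) : bool :=
  if Rle_dec (lo I) x then (if Rlt_dec x (hi I) then true else false) else false.

Definition chi (I : intv) (x : R) : R := if inI I x then 1 else 0.
Definition chi2 (I J : intv) (x : R) : R := if orb (inI I x) (inI J x) then 1 else 0.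

Definition chiS (S : R -> Prop) (x : R) : R :=
  if excluded_middle_informative (S x) then 1 else 0.

Definition len (I : intv) : R := hi I - lo I.
Definition Iminus (I : intv) : intv := mkI (lo I) ((lo I + hi I) / 2).
Definition Iplus (I : intv) : intv := mkI ((lo I + hi I) / 2) (hi I).
Definition Isub (I : intv) (m : nat) : intv := mkI (hi I - len I / 3 ^ m) (hi I).
Definition third (J : intv) (i : nat) : intv :=
  mkI (lo J + INR (i - 1) * len J / 3) (lo J + INR i * len J / 3).

Fixpoint sumlt (N : nat) (f : nat -> R) : R :=
  match N with O => 0 | S N' => sumlt N' f + f N' end.

Definition eps (k : nat) : R := / 3 ^ k.
Definition pp (k : nat) : R :=
  / (3 * eps k) * ((1 + eps k) / 2 + 4 * eps k ^ 2 / (1 + eps k)).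
Definition uu (k : nat) : R := sqrt (pp k) + sqrt (pp k - 1).

Fixpoint wnu (k : nat) (nu : nat) (omega sigma : R) (I : intv) (x : R) : R :=
  match nu with
  | O => omega / sqrt (pp k) * (uu k * chi (Iminus I) x + / uu k * chi (Iplus I) x)
  | S nu' =>
      omega / pp k *
        (sumlt (k - 1) (fun m => chi (third (Isub I m) 1) x)
         + chi2 (third (Isub I (k - 1)) 1) (third (Isub I (k - 1)) 2) x
         + 4 * eps k / (1 + eps k) * chi (third (Isub I (k - 1)) 3) x)
      + sumlt (k - 1) (fun m => wnu k nu' (2 * omega) (sigma / 2) (third (Isub I m) 2) x)
  end.

Definition nn (k : nat) : nat := 3 ^ (k - 1).

Definition ww (k : nat) (x : R) : R := wnu k (nn k) 1 (pp k) (mkI 0 1) (frac_part x).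
Definition sig (k : nat) (x : R) : R := / ww k x.

Inductive carries (k : nat) : nat -> intv -> Prop :=
  | carries_unit : forall j : Z, carries k (nn k) (mkI (IZR j) (IZR j + 1))
  | carries_child : forall nu I m, carries k (S nu) I -> (m <= k - 2)%nat ->
      carries k nu (third (Isub I m) 2).

Definition supp (k nu : nat) (x : R) : Prop :=
  exists I, carries k nu I /\ inI I x = true.

Definition wt (k : nat) (x : R) : R :=
  sumlt (nn k) (fun i => let l := S i in
     2 ^ l * chiS (fun y => supp k (nn k - (l - 1)) y /\ ~ supp k (nn k - l) y) x)
  + 2 ^ (S (nn k)) * chiS (supp k 0) x.

(* On a carrier J of w_nu, w coincides with w_nu(2^(n-nu), _, J).  For nu >= 1 it is
   therefore 2^(n-nu)/p on the first third of each J_m (m <= k-2) and on the first two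
   thirds of J_(k-1), 2^(n-nu) c/p with c = 4 eps/(1+eps) on the last third of J_(k-1),
   while the middle thirds of the J_m (m <= k-2) carry w_(nu-1).  Off those middle
   thirds wt = 2^(n-nu+1), hence wt^2 sigma = 4^(n-nu+1)/w.  By induction on nu (using
   u + 1/u = 2 sqrt p at the bottom level), the choice of p yields the exact mass
   int_J w = 2^(n-nu)|J|  and the bound  int_J wt^2 sigma <= tau 2^(n-nu)|J|  with
   tau = p(1+eps)/eps = 4p/c.  Adding up the pieces of I_m, with
   s = |I_m| - |I_(k-1)| >= 2|I_(k-1)|, gives  int_(I_m) w >= 2^(n-nu) s  and, since
   1/eps <= 6p,  int_(I_m) wt^2 sigma <= 10 p^2 2^(n-nu) s.  For nu = 0 the bound holds
   pointwise, because there w >= 2^n/(2p) as u <= 2 sqrt p. *)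

From Stdlib Require Import Reals ZArith ClassicalEpsilon Lra Lia.
From Coquelicot Require Import Coquelicot.
Open Scope R_scope.

Definition mem (I : intv) (x : R) : Prop := lo I <= x < hi I.

Lemma inI_spec I x : inI I x = true <-> mem I x.
Proof.
  unfold inI, mem; destruct (Rle_dec (lo I) x), (Rlt_dec x (hi I));
    split; intros; try lra; try discriminate; auto.
Qed.

Lemma inI_out I x : ~ mem I x -> inI I x = false.
Proof. intros H; destruct (inI I x) eqn:E; auto; apply inI_spec in E; tauto. Qed.

Lemma chi_in I x : mem I x -> chi I x = 1.
Proof. intros H; unfold chi; apply inI_spec in H; now rewrite H. Qed.

Lemma chi_out I x : ~ mem I x -> chi I x = 0.
Proof. intros H; unfold chi; now rewrite inI_out. Qed.

Lemma chi2_in I J x : mem I x \/ mem J x -> chi2 I J x = 1.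
Proof.
  unfold chi2; intros [H|H]; apply inI_spec in H; rewrite H; auto.
  now rewrite Bool.orb_true_r.
Qed.

Lemma chi2_out I J x : ~ mem I x -> ~ mem J x -> chi2 I J x = 0.
Proof. intros H1 H2; unfold chi2; now rewrite !inI_out. Qed.

Lemma chiS_in (S : R -> Prop) x : S x -> chiS S x = 1.
Proof. unfold chiS; destruct excluded_middle_informative; tauto. Qed.

Lemma chiS_out (S : R -> Prop) x : ~ S x -> chiS S x = 0.
Proof. unfold chiS; destruct excluded_middle_informative; tauto. Qed.

Lemma sumlt_ext N f g : (forall i, (i < N)%nat -> f i = g i) -> sumlt N f = sumlt N g.
Proof.
  induction N as [|N IH]; simpl; intros H; auto.
  rewrite IH, H by (try lia; intros; apply H; lia); reflexivity.
Qed.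

Lemma sumlt_0 N f : (forall i, (i < N)%nat -> f i = 0) -> sumlt N f = 0.
Proof.
  induction N as [|N IH]; simpl; intros H; auto.
  rewrite IH, H by (try lia; intros; apply H; lia); ring.
Qed.

Lemma sumlt_single N f i0 : (i0 < N)%nat ->
  (forall i, (i < N)%nat -> i <> i0 -> f i = 0) -> sumlt N f = f i0.
Proof.
  induction N as [|N IH]; simpl; intros Hi0 H; [lia|].
  destruct (Nat.eq_dec i0 N) as [->|Hne].
  - rewrite sumlt_0; [ring|]. intros; apply H; lia.
  - rewrite IH, (H N) by (try lia; intros; apply H; lia); ring.
Qed.

Definition sub_lo (J : intv) (m : nat) : R := lo (Isub J m).
Definition third_len (J : intv) (m : nat) : R := len J / 3 ^ S m.

Lemma pow3_pos m : 0 < 3 ^ m.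
Proof. apply pow_lt; lra. Qed.

Ltac solve_thirds :=
  unfold sub_lo, third_len, third, Isub, len; simpl; field; apply pow_nonzero; lra.

Lemma third1_lo J m : lo (third (Isub J m) 1) = sub_lo J m.
Proof. solve_thirds. Qed.
Lemma third1_hi J m : hi (third (Isub J m) 1) = sub_lo J m + third_len J m.
Proof. solve_thirds. Qed.
Lemma third2_lo J m : lo (third (Isub J m) 2) = sub_lo J m + third_len J m.
Proof. solve_thirds. Qed.
Lemma third2_hi J m : hi (third (Isub J m) 2) = sub_lo J (S m).
Proof. solve_thirds. Qed.
Lemma third3_lo J m : lo (third (Isub J m) 3) = sub_lo J (S m).
Proof. solve_thirds. Qed.
Lemma third3_hi J m : hi (third (Isub J m) 3) = hi J.
Proof. solve_thirds. Qed.
Lemma len_third2 J m : len (third (Isub J m) 2) = third_len J m.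
Proof. solve_thirds. Qed.
Lemma sub_lo_S J m : sub_lo J (S m) = sub_lo J m + 2 * third_len J m.
Proof. solve_thirds. Qed.
Lemma sub_lo_0 J : sub_lo J 0 = lo J.
Proof. solve_thirds. Qed.

Section Geometry.
Variable J : intv.
Hypothesis HJ : len J > 0.

Lemma third_len_pos m : third_len J m > 0.
Proof. apply Rdiv_lt_0_compat; [exact HJ | apply pow3_pos]. Qed.

Lemma sub_lo_lt_hi m : sub_lo J m < hi J.
Proof.
  unfold sub_lo, Isub; simpl.
  assert (0 < len J / 3 ^ m) by (apply Rdiv_lt_0_compat; [exact HJ | apply pow3_pos]).
  lra.
Qed.

Lemma sub_lo_mono m m' : (m <= m')%nat -> sub_lo J m <= sub_lo J m'.
Proof.
  induction 1; [lra|]. rewrite sub_lo_S. pose proof (third_len_pos m0). lra.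
Qed.

Lemma lo_le_sub_lo m : lo J <= sub_lo J m.
Proof. rewrite <- sub_lo_0; apply sub_lo_mono; lia. Qed.

(* The first two thirds of [J_m] form the block [[sub_lo J m, sub_lo J (S m))];
   the last third is [J_(m+1)]. *)
Lemma mem_third12_block m i x : (i = 1 \/ i = 2)%nat -> mem (third (Isub J m) i) x ->
  sub_lo J m <= x < sub_lo J (S m).
Proof.
  unfold mem; pose proof (third_len_pos m); intros [->| ->].
  - rewrite third1_lo, third1_hi, sub_lo_S; lra.
  - rewrite third2_lo, third2_hi, sub_lo_S; lra.
Qed.

Lemma mem_third_sub m i x : (i = 1 \/ i = 2 \/ i = 3)%nat ->
  mem (third (Isub J m) i) x -> mem J x.
Proof.
  intros Hi Hx. pose proof (lo_le_sub_lo m). pose proof (sub_lo_lt_hi (S m)).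
  pose proof (sub_lo_mono m (S m) ltac:(lia)).
  destruct Hi as [->|[->| ->]];
    try (apply mem_third12_block in Hx; auto; unfold mem; lra).
  unfold mem in *; rewrite third3_lo, third3_hi in Hx; lra.
Qed.

Lemma not_mem_third12_other m m' i x : (i = 1 \/ i = 2)%nat -> m' <> m ->
  sub_lo J m <= x < sub_lo J (S m) -> ~ mem (third (Isub J m') i) x.
Proof.
  intros Hi Hne Hx Hm. apply mem_third12_block in Hm; auto.
  destruct (Nat.lt_ge_cases m' m).
  - pose proof (sub_lo_mono (S m') m ltac:(lia)); lra.
  - pose proof (sub_lo_mono (S m) m' ltac:(lia)); lra.
Qed.

Lemma not_mem_third12_above m m' i x : (i = 1 \/ i = 2)%nat -> (S m' <= m)%nat ->
  sub_lo J m <= x -> ~ mem (third (Isub J m') i) x.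
Proof.
  intros Hi Hle Hx Hm. apply mem_third12_block in Hm; auto.
  pose proof (sub_lo_mono (S m') m Hle); lra.
Qed.

Lemma not_mem_third_below m i x : (i = 1 \/ i = 2 \/ i = 3)%nat ->
  x < sub_lo J m -> ~ mem (third (Isub J m) i) x.
Proof.
  unfold mem; intros Hi Hx Hm. pose proof (third_len_pos m).
  destruct Hi as [->|[->| ->]].
  - rewrite third1_lo in Hm; lra.
  - rewrite third2_lo in Hm; lra.
  - rewrite third3_lo, sub_lo_S in Hm; lra.
Qed.

End Geometry.

Lemma wnu_out k nu om sg I x : len I > 0 -> ~ mem I x -> wnu k nu om sg I x = 0.
Proof.
  revert om sg I. induction nu as [|nu IH]; intros om sg I HL Hx; cbn [wnu].
  - rewrite !chi_out; [ring| |]; unfold mem, Iplus, Iminus, len in *; simpl in *; lra.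
  - assert (Hsub : forall m i, (i = 1 \/ i = 2 \/ i = 3)%nat -> ~ mem (third (Isub I m) i) x)
      by (intros m i Hi Hm; apply Hx; exact (mem_third_sub I HL m i x Hi Hm)).
    rewrite sumlt_0, chi2_out, chi_out, sumlt_0; try ring; auto.
    + intros i _. apply IH; auto. rewrite len_third2; apply third_len_pos; auto.
    + intros i _. apply chi_out; auto.
Qed.

Section WnuPieces.
Variables (k : nat) (nu : nat) (om sg : R) (J : intv).
Hypothesis hk : (2 <= k)%nat.
Hypothesis HJ : len J > 0.

Let flat x := sumlt (k - 1) (fun m => chi (third (Isub J m) 1) x).
Let last12 x := chi2 (third (Isub J (k - 1)) 1) (third (Isub J (k - 1)) 2) x.
Let last3 x := chi (third (Isub J (k - 1)) 3) x.
Let children x := sumlt (k - 1) (fun m => wnu k nu (2 * om) (sg / 2) (third (Isub J m) 2) x).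

Lemma wnuS_unfold x :
  wnu k (S nu) om sg J x =
  om / pp k * (flat x + last12 x + 4 * eps k / (1 + eps k) * last3 x) + children x.
Proof. reflexivity. Qed.

Lemma last_pieces_below x m : (m <= k - 2)%nat -> x < sub_lo J (S m) ->
  last12 x = 0 /\ last3 x = 0.
Proof.
  intros Hm Hx. pose proof (sub_lo_mono J HJ (S m) (k - 1) ltac:(lia)).
  split; [apply chi2_out | apply chi_out]; apply not_mem_third_below; auto; lra.
Qed.

Lemma block_pieces_above x : sub_lo J (k - 1) <= x -> flat x = 0 /\ children x = 0.
Proof.
  intros Hx; split; apply sumlt_0; intros i Hi.
  - apply chi_out, (not_mem_third12_above J HJ (k - 1)); auto; lia.
  - apply wnu_out; [rewrite len_third2; apply third_len_pos; auto|].
    apply (not_mem_third12_above J HJ (k - 1)); auto; lia.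
Qed.

Lemma wnuS_third1 x m : (m <= k - 2)%nat -> mem (third (Isub J m) 1) x ->
  wnu k (S nu) om sg J x = om / pp k.
Proof.
  intros Hm Hx. pose proof (mem_third12_block J HJ m 1 x ltac:(auto) Hx) as Hb.
  rewrite wnuS_unfold. destruct (last_pieces_below x m Hm) as [-> ->]; [lra|].
  unfold flat, children.
  rewrite (sumlt_single _ _ m), chi_in, sumlt_0; auto; try ring; try lia.
  - intros i Hi. apply wnu_out; [rewrite len_third2; apply third_len_pos; auto|].
    destruct (Nat.eq_dec i m) as [->|Hne].
    + unfold mem in *; rewrite third2_lo; rewrite third1_hi in Hx; lra.
    + apply (not_mem_third12_other J HJ m); auto.
  - intros i Hi Hne. apply chi_out, (not_mem_third12_other J HJ m); auto.
Qed.

Lemma wnuS_third2 x m : (m <= k - 2)%nat -> mem (third (Isub J m) 2) x ->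
  wnu k (S nu) om sg J x = wnu k nu (2 * om) (sg / 2) (third (Isub J m) 2) x.
Proof.
  intros Hm Hx. pose proof (mem_third12_block J HJ m 2 x ltac:(auto) Hx) as Hb.
  rewrite wnuS_unfold. destruct (last_pieces_below x m Hm) as [-> ->]; [lra|].
  unfold flat, children.
  rewrite sumlt_0, (sumlt_single _ _ m); try ring; try lia.
  - intros i Hi Hne. apply wnu_out; [rewrite len_third2; apply third_len_pos; auto|].
    apply (not_mem_third12_other J HJ m); auto.
  - intros i Hi. apply chi_out. destruct (Nat.eq_dec i m) as [->|Hne].
    + unfold mem in *; rewrite third1_hi; rewrite third2_lo in Hx; lra.
    + apply (not_mem_third12_other J HJ m); auto.
Qed.

Lemma wnuS_last12 x :
  mem (third (Isub J (k - 1)) 1) x \/ mem (third (Isub J (k - 1)) 2) x ->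
  wnu k (S nu) om sg J x = om / pp k.
Proof.
  intros Hx.
  assert (Hb : sub_lo J (k - 1) <= x < sub_lo J (S (k - 1)))
    by (destruct Hx as [Hx|Hx]; [exact (mem_third12_block J HJ _ 1 x ltac:(auto) Hx)
                                  |exact (mem_third12_block J HJ _ 2 x ltac:(auto) Hx)]).
  rewrite wnuS_unfold. destruct (block_pieces_above x) as [-> ->]; [lra|].
  unfold last12, last3. rewrite chi2_in, chi_out by (auto; unfold mem; rewrite third3_lo; lra).
  ring.
Qed.

Lemma wnuS_last3 x : mem (third (Isub J (k - 1)) 3) x ->
  wnu k (S nu) om sg J x = om / pp k * (4 * eps k / (1 + eps k)).
Proof.
  intros Hx. assert (Hlo : sub_lo J (S (k - 1)) <= x)
    by (unfold mem in Hx; rewrite third3_lo in Hx; lra).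
  pose proof (sub_lo_mono J HJ (k - 1) (S (k - 1)) ltac:(lia)).
  rewrite wnuS_unfold. destruct (block_pieces_above x) as [-> ->]; [lra|].
  unfold last12, last3. rewrite chi_in, chi2_out; auto; try ring;
    intro Hm; apply (mem_third12_block J HJ) in Hm; auto; lra.
Qed.

End WnuPieces.

Lemma carries_level_le k nu I : carries k nu I -> (nu <= nn k)%nat.
Proof. induction 1; lia. Qed.

Lemma carries_len_pos k nu I : carries k nu I -> len I > 0.
Proof.
  induction 1; [unfold len; simpl; lra|].
  rewrite len_third2; apply third_len_pos; auto.
Qed.

Lemma carries_inv k nu I : carries k nu I ->
  (nu = nn k /\ exists j, I = mkI (IZR j) (IZR j + 1)) \/
  (exists P m, carries k (S nu) P /\ (m <= k - 2)%nat /\ I = third (Isub P m) 2).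
Proof. destruct 1; [left|right]; eauto 6. Qed.

Lemma unit_interval_unique (j1 j2 : Z) x :
  IZR j1 <= x < IZR j1 + 1 -> IZR j2 <= x < IZR j2 + 1 -> j1 = j2.
Proof.
  intros H1 H2.
  assert ((j1 < j2 + 1)%Z) by (apply lt_IZR; rewrite plus_IZR; simpl; lra).
  assert ((j2 < j1 + 1)%Z) by (apply lt_IZR; rewrite plus_IZR; simpl; lra).
  lia.
Qed.

Lemma carries_unique k nu I1 I2 x :
  carries k nu I1 -> carries k nu I2 -> mem I1 x -> mem I2 x -> I1 = I2.
Proof.
  remember (nn k - nu)%nat as d eqn:Hd. revert nu I1 I2 Hd.
  induction d as [|d IH]; intros nu I1 I2 Hd H1 H2 M1 M2.
  - pose proof (carries_level_le _ _ _ H1).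
    destruct (carries_inv _ _ _ H1) as [[_ [j1 ->]]|[P [m [HP _]]]];
      [|apply carries_level_le in HP; lia].
    destruct (carries_inv _ _ _ H2) as [[_ [j2 ->]]|[P [m [HP _]]]];
      [|apply carries_level_le in HP; lia].
    unfold mem in *; simpl in *. now rewrite (unit_interval_unique j1 j2 x).
  - destruct (carries_inv _ _ _ H1) as [[E _]|[P1 [m1 [HP1 [Hm1 ->]]]]]; [lia|].
    destruct (carries_inv _ _ _ H2) as [[E _]|[P2 [m2 [HP2 [Hm2 ->]]]]]; [lia|].
    pose proof (carries_len_pos _ _ _ HP1) as L1.
    pose proof (carries_len_pos _ _ _ HP2) as L2.
    assert (P1 = P2) as <-.
    { apply (IH (S nu)); auto; [lia | exact (mem_third_sub P1 L1 m1 2 x ltac:(auto) M1)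
                                    | exact (mem_third_sub P2 L2 m2 2 x ltac:(auto) M2)]. }
    destruct (Nat.eq_dec m1 m2) as [->|Hne]; auto.
    exfalso; apply (not_mem_third12_other P1 L1 m2 m1 2 x); auto.
    exact (mem_third12_block P1 L1 m2 2 x ltac:(auto) M2).
Qed.

Lemma supp_of_carries k a I x : carries k a I -> mem I x ->
  forall b, (a <= b <= nn k)%nat -> supp k b x.
Proof.
  induction 1 as [j|nu I m HI IH Hm]; intros Hx b Hb.
  - replace b with (nn k) by lia. exists (mkI (IZR j) (IZR j + 1)).
    split; [constructor | now apply inI_spec].
  - destruct (Nat.eq_dec b nu) as [->|Hne].
    + exists (third (Isub I m) 2). split; [now constructor | now apply inI_spec].
    + apply IH; [|lia]. apply (mem_third_sub I (carries_len_pos _ _ _ HI) m 2 x); auto.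
Qed.

Lemma supp_mono k a b x : supp k a x -> (a <= b <= nn k)%nat -> supp k b x.
Proof. intros [I [H Hx]]; apply inI_spec in Hx; eapply supp_of_carries; eauto. Qed.

Definition shift (I : intv) (t : R) : intv := mkI (lo I + t) (hi I + t).

Lemma inI_shift I t y : inI (shift I t) (y + t) = inI I y.
Proof.
  unfold inI, shift; simpl.
  destruct (Rle_dec (lo I + t) (y + t)), (Rle_dec (lo I) y); try lra; auto.
  destruct (Rlt_dec (y + t) (hi I + t)), (Rlt_dec y (hi I)); try lra; auto.
Qed.

Lemma wnu_shift k nu om sg I t y :
  wnu k nu om sg (shift I t) (y + t) = wnu k nu om sg I y.
Proof.
  assert (Hthird : forall I m i, third (Isub (shift I t) m) i = shift (third (Isub I m) i) t)
    by (intros; unfold third, Isub, shift, len; simpl; f_equal; field; apply pow_nonzero; lra).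
  revert om sg I. induction nu as [|nu IH]; intros om sg I; cbn [wnu]; unfold chi, chi2.
  - replace (Iminus (shift I t)) with (shift (Iminus I) t)
      by (unfold Iminus, shift; simpl; f_equal; field).
    replace (Iplus (shift I t)) with (shift (Iplus I) t)
      by (unfold Iplus, shift; simpl; f_equal; field).
    now rewrite !inI_shift.
  - rewrite !Hthird, !inI_shift. f_equal; [do 3 f_equal|];
      apply sumlt_ext; intros; rewrite Hthird; [now rewrite inI_shift | apply IH].
Qed.

(* The [sigma] argument of [wnu] never influences its value, hence the [exists s]. *)
Lemma ww_on_carrier k nu J x : (2 <= k)%nat -> carries k nu J -> mem J x ->
  exists s, ww k x = wnu k nu (2 ^ (nn k - nu)) s J x.
Proof.
  intros hk H; revert x; induction H as [j|nu I m HI IH Hm]; intros x Hx.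
  - exists (pp k). rewrite Nat.sub_diag. unfold mem in Hx; simpl in Hx.
    destruct (Int_part_frac_part_spec x j (x - IZR j)) as [_ Hf]; [lra|ring|].
    unfold ww. rewrite <- Hf.
    replace (mkI (IZR j) (IZR j + 1)) with (shift (mkI 0 1) (IZR j))
      by (unfold shift; simpl; f_equal; ring).
    replace x with ((x - IZR j) + IZR j) at 2 by ring.
    now rewrite wnu_shift.
  - pose proof (carries_len_pos _ _ _ HI) as HL.
    destruct (IH x) as [s Hs]; [apply (mem_third_sub I HL m 2 x); auto|].
    exists (s / 2). rewrite Hs, (wnuS_third2 k nu _ s I hk HL x m); auto.
    f_equal. apply carries_level_le in HI.
    replace (nn k - nu)%nat with (S (nn k - S nu)) by lia. simpl; ring.
Qed.

Lemma wt_exact_level k d x : (d <= nn k)%nat -> supp k (nn k - d) x ->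
  ((d < nn k)%nat -> ~ supp k (nn k - d - 1) x) -> wt k x = 2 ^ S d.
Proof.
  intros Hd Hs Hn. unfold wt.
  destruct (Nat.eq_dec d (nn k)) as [->|Hne].
  - rewrite Nat.sub_diag in Hs. rewrite sumlt_0, (chiS_in _ _ Hs); [ring|].
    intros i Hi. rewrite chiS_out; [ring|]. intros [_ H]. apply H.
    apply (supp_mono k 0); auto; lia.
  - rewrite (sumlt_single _ _ d); [|lia|].
    + rewrite chiS_in, (chiS_out (supp k 0)); [ring| |].
      * intro H. apply (Hn ltac:(lia)), (supp_mono k 0); auto; lia.
      * replace (S d - 1)%nat with d by lia. split; auto.
        replace (nn k - S d)%nat with (nn k - d - 1)%nat by lia. apply Hn; lia.
    + intros i Hi Hid. rewrite chiS_out; [ring|]. intros [H1 H2].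
      destruct (Nat.lt_ge_cases i d).
      * apply H2, (supp_mono k (nn k - d)); auto; lia.
      * apply (Hn ltac:(lia)), (supp_mono k (nn k - (S i - 1))); auto; lia.
Qed.

Lemma wt_on_level0 k J x : carries k 0 J -> mem J x -> wt k x = 2 * 2 ^ (nn k - 0).
Proof.
  intros H Hx. rewrite Nat.sub_0_r, (wt_exact_level k (nn k) x); [reflexivity|lia| |lia].
  rewrite Nat.sub_diag. exists J; split; auto. now apply inI_spec.
Qed.

Lemma wt_on_carrier_flat k nu J x : carries k (S nu) J -> mem J x ->
  (forall m, (m <= k - 2)%nat -> ~ mem (third (Isub J m) 2) x) ->
  wt k x = 2 * 2 ^ (nn k - S nu).
Proof.
  intros H Hx Hc. pose proof (carries_level_le _ _ _ H).
  rewrite (wt_exact_level k (nn k - S nu) x); [reflexivity|lia| |].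
  - replace (nn k - (nn k - S nu))%nat with (S nu) by lia.
    exists J; split; auto. now apply inI_spec.
  - intros _. replace (nn k - (nn k - S nu) - 1)%nat with nu by lia.
    intros [K [HK Hin]]. apply inI_spec in Hin.
    destruct (carries_inv _ _ _ HK) as [[E _]|[P [m [HP [Hm ->]]]]]; [lia|].
    assert (P = J) as ->; [|exact (Hc m Hm Hin)].
    apply (carries_unique k (S nu) P J x); auto.
    apply (mem_third_sub P (carries_len_pos _ _ _ HP) m 2 x); auto.
Qed.

Definition tail_coef (k : nat) : R := 4 * eps k / (1 + eps k).
(* [tau = 4 p / tail_coef] is the value of [wt^2 sigma / 2^(n-nu)] on the last third
   of [J_(k-1)] for a carrier [J] of [w_nu]. *)
Definition tau (k : nat) : R := pp k * (1 + eps k) / eps k.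

Section Constants.
Variable k : nat.
Hypothesis hk : (2 <= k)%nat.

Lemma eps_pos : 0 < eps k.
Proof. apply Rinv_0_lt_compat, pow3_pos. Qed.

Lemma inv_eps_ge : 9 <= / eps k.
Proof.
  unfold eps; rewrite Rinv_inv.
  replace 9 with (3 ^ 2) by (simpl; ring). apply Rle_pow; lra || lia.
Qed.

Lemma pp_mul_eps : 6 * pp k * eps k = 1 + eps k + 8 * eps k ^ 2 / (1 + eps k).
Proof. pose proof eps_pos. unfold pp. field. lra. Qed.

Lemma inv_eps_le : / eps k <= 6 * pp k.
Proof.
  pose proof eps_pos. pose proof pp_mul_eps.
  assert (0 <= 8 * eps k ^ 2 / (1 + eps k)) by (apply Rdiv_le_0_compat; nra).
  apply Rmult_le_reg_r with (eps k); auto. rewrite Rinv_l; lra.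
Qed.

Lemma pp_ge : 3 / 2 <= pp k.
Proof. pose proof inv_eps_ge. pose proof inv_eps_le. lra. Qed.

Lemma pp_pos : 0 < pp k.
Proof. pose proof pp_ge; lra. Qed.

Lemma tail_coef_pos : 0 < tail_coef k.
Proof. pose proof eps_pos. unfold tail_coef. apply Rdiv_lt_0_compat; lra. Qed.

Lemma tau_tail_coef : 4 * pp k / tail_coef k = tau k.
Proof. pose proof eps_pos. unfold tau, tail_coef. field. lra. Qed.

Lemma tau_eq : tau k = pp k + pp k * / eps k.
Proof. pose proof eps_pos. unfold tau. field. lra. Qed.

Lemma tau_ge : 4 * pp k <= tau k.
Proof. pose proof inv_eps_ge. pose proof pp_pos. rewrite tau_eq. nra. Qed.

Lemma tau_le : tau k <= pp k + 6 * pp k ^ 2.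
Proof. pose proof inv_eps_le. pose proof pp_pos. rewrite tau_eq. nra. Qed.

Lemma len_div_pow3_pred L : L / 3 ^ (k - 1) = 3 * eps k * L.
Proof.
  unfold eps. replace k with (S (k - 1)) at 2 by lia. simpl.
  field. apply pow_nonzero; lra.
Qed.

Lemma uu_add_inv : uu k + / uu k = 2 * sqrt (pp k).
Proof.
  pose proof pp_ge. pose proof (sqrt_pos (pp k - 1)).
  pose proof (sqrt_sqrt (pp k) ltac:(lra)). pose proof (sqrt_sqrt (pp k - 1) ltac:(lra)).
  assert (1 <= sqrt (pp k)) by (rewrite <- sqrt_1; apply sqrt_le_1; lra).
  replace (/ uu k) with (sqrt (pp k) - sqrt (pp k - 1)); [unfold uu; ring|].
  unfold uu. apply Rmult_eq_reg_l with (sqrt (pp k) + sqrt (pp k - 1)); [|lra].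
  rewrite Rinv_r by lra. nra.
Qed.

Lemma uu_bounds : 1 <= uu k <= 2 * sqrt (pp k).
Proof.
  pose proof pp_ge. pose proof (sqrt_pos (pp k - 1)).
  assert (1 <= sqrt (pp k)) by (rewrite <- sqrt_1; apply sqrt_le_1; lra).
  assert (sqrt (pp k - 1) <= sqrt (pp k)) by (apply sqrt_le_1; lra).
  unfold uu; lra.
Qed.

End Constants.

Definition wt2_sig (k : nat) (x : R) : R := wt k x ^ 2 * sig k x.

Lemma wt2_sig_eq k x om : wt k x = 2 * om -> ww k x <> 0 -> wt2_sig k x = 4 * om ^ 2 / ww k x.
Proof. intros Hwt Hw. unfold wt2_sig, sig. rewrite Hwt. field. exact Hw. Qed.

Lemma is_RInt_const_on (f : R -> R) a b c : a <= b -> (forall x, a < x < b -> f x = c) ->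
  is_RInt f a b ((b - a) * c).
Proof.
  intros Hab H. apply (is_RInt_ext (fun _ => c)); [|exact (is_RInt_const a b c)].
  intros x Hx. rewrite Rmin_left, Rmax_right in Hx by lra. symmetry; auto.
Qed.

Lemma is_RInt_Chasles_eq (f : R -> R) a b c l1 l2 v :
  is_RInt f a b l1 -> is_RInt f b c l2 -> l1 + l2 = v -> is_RInt f a c v.
Proof. intros H1 H2 <-. exact (is_RInt_Chasles f a b c l1 l2 H1 H2). Qed.

Lemma flat_ratio_le om p w : 0 < om -> 0 < p -> om / (2 * p) <= w ->
  4 * om ^ 2 / w <= 30 * p ^ 2 * w.
Proof.
  intros Hom Hp Hw. assert (0 < om / (2 * p)) by (apply Rdiv_lt_0_compat; lra).
  assert (om <= 2 * p * w) by (apply Rmult_le_reg_r with (/ (2 * p));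
    [apply Rinv_0_lt_compat; lra | replace (2 * p * w * / (2 * p)) with w by (field; lra); exact Hw]).
  apply Rmult_le_reg_r with w; [lra|].
  replace (4 * om ^ 2 / w * w) with (4 * om ^ 2) by (field; lra). nra.
Qed.

Section Level0.
Variables (k : nat) (J : intv).
Hypothesis hk : (2 <= k)%nat.
Hypothesis HJ : carries k 0 J.

Let om := 2 ^ (nn k - 0).
Let mid := (lo J + hi J) / 2.

Lemma ww_level0 x : mem J x ->
  ww k x = om / sqrt (pp k) * (if Rlt_dec x mid then uu k else / uu k).
Proof.
  intros Hx. destruct (ww_on_carrier k 0 J x hk HJ Hx) as [s ->]. cbn [wnu].
  unfold mid, mem in *; destruct (Rlt_dec x ((lo J + hi J) / 2)).
  - rewrite chi_in, chi_out by (unfold mem, Iminus, Iplus; simpl; lra). fold om; ring.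
  - rewrite chi_out, chi_in by (unfold mem, Iminus, Iplus; simpl; lra). fold om; ring.
Qed.

Lemma ww_level0_ge x : mem J x -> om / (2 * pp k) <= ww k x.
Proof.
  intros Hx. rewrite ww_level0 by exact Hx.
  pose proof (pp_ge k hk). pose proof (uu_bounds k hk).
  pose proof (sqrt_sqrt (pp k) ltac:(lra)) as Hsq.
  assert (1 <= sqrt (pp k)) by (rewrite <- sqrt_1; apply sqrt_le_1; lra).
  assert (0 < om) by (apply pow_lt; lra).
  assert (Ha : / (2 * sqrt (pp k)) <= if Rlt_dec x mid then uu k else / uu k).
  { destruct (Rlt_dec x mid); [|apply Rinv_le_contravar; lra].
    apply Rle_trans with 1; [|lra]. rewrite <- Rinv_1. apply Rinv_le_contravar; lra. }
  apply Rle_trans with (om / sqrt (pp k) * / (2 * sqrt (pp k))).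
  - right. set (sp := sqrt (pp k)) in *. rewrite <- Hsq. field. lra.
  - apply Rmult_le_compat_l; [apply Rdiv_le_0_compat|]; lra.
Qed.

Lemma wt2_sig_level0 x : mem J x -> wt2_sig k x = 4 * om ^ 2 / ww k x.
Proof.
  intros Hx. pose proof (ww_level0_ge x Hx). pose proof (pp_pos k hk).
  assert (0 < om / (2 * pp k)) by (apply Rdiv_lt_0_compat; [apply pow_lt|]; lra).
  apply wt2_sig_eq; [exact (wt_on_level0 k J x HJ Hx) | lra].
Qed.

Lemma wt2_sig_level0_le x : mem J x -> wt2_sig k x <= 30 * pp k ^ 2 * ww k x.
Proof.
  intros Hx. rewrite wt2_sig_level0 by exact Hx.
  apply flat_ratio_le; [apply pow_lt; lra | apply (pp_pos k hk) | exact (ww_level0_ge x Hx)].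
Qed.

Lemma level0_integrals :
  is_RInt (ww k) (lo J) (hi J) (om * len J) /\
  is_RInt (wt2_sig k) (lo J) (hi J) (4 * om * pp k * len J).
Proof.
  pose proof (carries_len_pos _ _ _ HJ) as HL. unfold len in *.
  pose proof (pp_ge k hk). pose proof (uu_bounds k hk). pose proof (uu_add_inv k hk) as Hu.
  pose proof (sqrt_sqrt (pp k) ltac:(lra)) as Hsq.
  assert (1 <= sqrt (pp k)) by (rewrite <- sqrt_1; apply sqrt_le_1; lra).
  assert (0 < om) by (apply pow_lt; lra).
  assert (Hval : forall x a, mem J x -> ww k x = om / sqrt (pp k) * a -> 0 < a ->
                   wt2_sig k x = 4 * om * sqrt (pp k) / a).
  { intros x a Hx Hw Ha. rewrite wt2_sig_level0, Hw by exact Hx. field; lra. }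
  assert (Hl : forall x, lo J < x < mid -> ww k x = om / sqrt (pp k) * uu k).
  { intros x Hx. rewrite ww_level0 by (unfold mem, mid in *; lra).
    destruct Rlt_dec; [reflexivity | lra]. }
  assert (Hr : forall x, mid < x < hi J -> ww k x = om / sqrt (pp k) * / uu k).
  { intros x Hx. rewrite ww_level0 by (unfold mem, mid in *; lra).
    destruct Rlt_dec; [lra | reflexivity]. }
  assert (Hlm : lo J <= mid <= hi J) by (unfold mid; lra).
  set (sp := sqrt (pp k)) in *. set (u := uu k) in *.
  split; eapply (is_RInt_Chasles_eq _ _ mid).
  - apply is_RInt_const_on; [lra | exact Hl].
  - apply is_RInt_const_on; [lra | exact Hr].
  - unfold mid. transitivity ((hi J - lo J) / 2 * (om / sp) * (u + / u)); [field; lra|].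
    rewrite Hu. field. lra.
  - apply is_RInt_const_on; [lra | intros x Hx; apply (Hval x u); [unfold mem, mid in *; lra | apply Hl | ]; lra].
  - apply is_RInt_const_on; [lra | intros x Hx].
    replace (4 * om * sp * u) with (4 * om * sp / / u) by (field; lra).
    apply (Hval x (/ u)); [unfold mem, mid in *; lra | apply Hr; lra | apply Rinv_0_lt_compat; lra].
  - unfold mid. transitivity ((hi J - lo J) / 2 * (4 * om * sp) * (u + / u)); [field; lra|].
    rewrite Hu, <- Hsq. field.
Qed.

End Level0.

(* For [J] carrying [w_(nu+1)] and [om = 2 ^ (n - nu - 1)]: the integral of [w] over
   [J_m] and an upper bound for that of [wt^2 sigma].  With [Q = |J_(k-1)|] and
   [s = |J_m| - Q], the flat pieces of [J_m] have total length [s/2 + 2Q/3], the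
   children total length [s/2], and the tail length [Q/3]. *)
Definition tail_mass (k : nat) (om : R) (J : intv) (m : nat) : R :=
  let Q := len J / 3 ^ (k - 1) in let s := len J / 3 ^ m - Q in
  om / pp k * (s / 2 + 2 * Q / 3 + tail_coef k * Q / 3) + om * s.

Definition tail_energy (k : nat) (om : R) (J : intv) (m : nat) : R :=
  let Q := len J / 3 ^ (k - 1) in let s := len J / 3 ^ m - Q in
  4 * om * pp k * (s / 2 + 2 * Q / 3) + tau k * om * (s + Q / 3).

Lemma tail_mass_0 k om J : (2 <= k)%nat -> tail_mass k om J 0 = om * len J.
Proof.
  intros hk. pose proof (eps_pos k). pose proof (pp_mul_eps k) as Hp.
  unfold tail_mass; cbv zeta. rewrite len_div_pow3_pred by exact hk.
  assert (pp k = (1 + eps k + 8 * eps k ^ 2 / (1 + eps k)) / (6 * eps k))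
    as -> by (rewrite <- Hp; field; lra).
  unfold tail_coef. simpl. field. repeat split; nra.
Qed.

Lemma tail_energy_0 k om J : (2 <= k)%nat -> tail_energy k om J 0 = tau k * om * len J.
Proof.
  intros hk. pose proof (eps_pos k).
  unfold tail_energy, tau; cbv zeta. rewrite len_div_pow3_pred by exact hk.
  simpl. field. lra.
Qed.

Definition carrier_bounds (k nu : nat) : Prop := forall C, carries k nu C ->
  is_RInt (ww k) (lo C) (hi C) (2 ^ (nn k - nu) * len C) /\
  exists v, is_RInt (wt2_sig k) (lo C) (hi C) v /\ v <= tau k * 2 ^ (nn k - nu) * len C.

Section LevelS.
Variables (k nu : nat) (J : intv).
Hypothesis hk : (2 <= k)%nat.
Hypothesis HJ : carries k (S nu) J.

Let om := 2 ^ (nn k - S nu).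
Let HL : len J > 0 := carries_len_pos _ _ _ HJ.

Lemma om_pos : 0 < om.
Proof. apply pow_lt; lra. Qed.

Lemma values_off_children x V : mem J x ->
  (forall m, (m <= k - 2)%nat -> ~ mem (third (Isub J m) 2) x) ->
  (forall s, wnu k (S nu) om s J x = V) -> 0 < V -> ww k x = V /\ wt2_sig k x = 4 * om ^ 2 / V.
Proof.
  intros Hx Hc HV HV0.
  destruct (ww_on_carrier k (S nu) J x hk HJ Hx) as [s Hs]. rewrite HV in Hs.
  split; auto. rewrite wt2_sig_eq with (om := om), Hs; auto; [|lra].
  exact (wt_on_carrier_flat k nu J x HJ Hx Hc).
Qed.

Lemma values_third1 x m : (m <= k - 2)%nat -> mem (third (Isub J m) 1) x ->
  ww k x = om / pp k /\ wt2_sig k x = 4 * om * pp k.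
Proof.
  intros Hm Hx. pose proof om_pos. pose proof (pp_pos k hk).
  destruct (values_off_children x (om / pp k)) as [-> ->].
  - exact (mem_third_sub J HL m 1 x ltac:(auto) Hx).
  - intros m' Hm'. destruct (Nat.eq_dec m' m) as [->|Hne].
    + unfold mem in *; rewrite third2_lo; rewrite third1_hi in Hx; lra.
    + apply (not_mem_third12_other J HL m); auto.
      exact (mem_third12_block J HL m 1 x ltac:(auto) Hx).
  - intros s; exact (wnuS_third1 k nu om s J hk HL x m Hm Hx).
  - apply Rdiv_lt_0_compat; lra.
  - split; [reflexivity | field; lra].
Qed.

Lemma values_last12 x : sub_lo J (k - 1) <= x < sub_lo J k ->
  ww k x = om / pp k /\ wt2_sig k x = 4 * om * pp k.
Proof.
  intros Hx. pose proof om_pos. pose proof (pp_pos k hk).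
  pose proof (lo_le_sub_lo J HL (k - 1)). pose proof (sub_lo_lt_hi J HL k).
  assert (Hp : mem (third (Isub J (k - 1)) 1) x \/ mem (third (Isub J (k - 1)) 2) x).
  { replace (sub_lo J k) with (sub_lo J (S (k - 1))) in Hx by (f_equal; lia). unfold mem.
    rewrite third1_lo, third1_hi, third2_lo, third2_hi.
    destruct (Rlt_or_le x (sub_lo J (k - 1) + third_len J (k - 1))); [left|right]; lra. }
  destruct (values_off_children x (om / pp k)) as [-> ->].
  - unfold mem; lra.
  - intros m' Hm'. apply (not_mem_third12_above J HL (k - 1)); [auto | lia | lra].
  - intros s; exact (wnuS_last12 k nu om s J HL x Hp).
  - apply Rdiv_lt_0_compat; lra.
  - split; [reflexivity | field; lra].
Qed.

Lemma values_last3 x : sub_lo J k <= x < hi J ->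
  ww k x = om / pp k * tail_coef k /\ wt2_sig k x = tau k * om.
Proof.
  intros Hx. pose proof om_pos. pose proof (pp_pos k hk). pose proof (tail_coef_pos k).
  pose proof (sub_lo_mono J HL (k - 1) k ltac:(lia)).
  assert (Hp : mem (third (Isub J (k - 1)) 3) x).
  { unfold mem; rewrite third3_lo, third3_hi. replace (S (k - 1)) with k by lia. lra. }
  destruct (values_off_children x (om / pp k * tail_coef k)) as [-> ->].
  - unfold mem. pose proof (lo_le_sub_lo J HL k). lra.
  - intros m' Hm'. apply (not_mem_third12_above J HL (k - 1)); [auto | lia | lra].
  - intros s; exact (wnuS_last3 k nu om s J hk HL x Hp).
  - apply Rmult_lt_0_compat; [apply Rdiv_lt_0_compat|]; lra.
  - split; [reflexivity|]. rewrite <- (tau_tail_coef k). field. lra.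
Qed.

Lemma last_block_integrals :
  is_RInt (ww k) (sub_lo J (k - 1)) (hi J) (tail_mass k om J (k - 1)) /\
  is_RInt (wt2_sig k) (sub_lo J (k - 1)) (hi J) (tail_energy k om J (k - 1)).
Proof.
  pose proof (sub_lo_lt_hi J HL k) as Hk. pose proof (third_len_pos J HL (k - 1)).
  assert (Hmid : sub_lo J k = sub_lo J (k - 1) + 2 * third_len J (k - 1))
    by (rewrite <- sub_lo_S; f_equal; lia).
  assert (HQ : hi J - sub_lo J k = len J / 3 ^ (k - 1) / 3).
  { rewrite Hmid. unfold sub_lo, third_len, Isub; simpl. field. apply pow_nonzero; lra. }
  assert (HD : third_len J (k - 1) = len J / 3 ^ (k - 1) / 3)
    by (unfold third_len; simpl; field; apply pow_nonzero; lra).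
  unfold tail_mass, tail_energy; cbv zeta.
  replace (len J / 3 ^ (k - 1) - len J / 3 ^ (k - 1)) with 0 by ring.
  split; eapply (is_RInt_Chasles_eq _ _ (sub_lo J k)).
  - apply is_RInt_const_on; [lra | intros x Hx; apply values_last12; lra].
  - apply is_RInt_const_on; [lra | intros x Hx; apply values_last3; lra].
  - rewrite HQ, Hmid, HD. pose proof (pp_pos k hk). field. split; [apply pow_nonzero|]; lra.
  - apply is_RInt_const_on; [lra | intros x Hx; apply values_last12; lra].
  - apply is_RInt_const_on; [lra | intros x Hx; apply values_last3; lra].
  - rewrite HQ, Hmid, HD. field. apply pow_nonzero; lra.
Qed.

Hypothesis IH : carrier_bounds k nu.

Lemma block_integrals m : (m <= k - 2)%nat ->
  is_RInt (ww k) (sub_lo J m) (sub_lo J (S m)) (third_len J m * (om / pp k + 2 * om)) /\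
  exists v, is_RInt (wt2_sig k) (sub_lo J m) (sub_lo J (S m)) v /\
            v <= third_len J m * (4 * om * pp k + 2 * tau k * om).
Proof.
  intros Hm. pose proof (third_len_pos J HL m). pose proof (sub_lo_S J m).
  assert (Hom : 2 ^ (nn k - nu) = 2 * om).
  { pose proof (carries_level_le _ _ _ HJ).
    replace (nn k - nu)%nat with (S (nn k - S nu)) by lia. reflexivity. }
  destruct (IH (third (Isub J m) 2)) as [Cw [v [Ce Cv]]]; [now constructor|].
  rewrite third2_lo, third2_hi in Cw, Ce. rewrite len_third2, Hom in Cw, Cv.
  assert (Hflat : forall x, sub_lo J m < x < sub_lo J m + third_len J m ->
            ww k x = om / pp k /\ wt2_sig k x = 4 * om * pp k).
  { intros x Hx. apply (values_third1 x m Hm). unfold mem. rewrite third1_lo, third1_hi. lra. }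
  split; [|eexists; split].
  - eapply (is_RInt_Chasles_eq _ _ (sub_lo J m + third_len J m)); [| exact Cw |].
    + apply is_RInt_const_on; [lra | intros x Hx; apply (Hflat x Hx)].
    + ring.
  - eapply (is_RInt_Chasles_eq _ _ (sub_lo J m + third_len J m)); [| exact Ce | reflexivity].
    apply is_RInt_const_on; [lra | intros x Hx; apply (Hflat x Hx)].
  - lra.
Qed.

Lemma tail_integrals m : (m <= k - 1)%nat ->
  is_RInt (ww k) (sub_lo J m) (hi J) (tail_mass k om J m) /\
  exists v, is_RInt (wt2_sig k) (sub_lo J m) (hi J) v /\ v <= tail_energy k om J m.
Proof.
  remember (k - 1 - m)%nat as j eqn:Hj. revert m Hj.
  induction j as [|j IHj]; intros m Hj Hm.
  - replace m with (k - 1)%nat by lia.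
    destruct last_block_integrals as [Hw He]. split; [exact Hw|]. eexists; split; [exact He|lra].
  - destruct (IHj (S m) ltac:(lia) ltac:(lia)) as [Tw [v [Te Tv]]].
    destruct (block_integrals m ltac:(lia)) as [Bw [b [Be Bv]]].
    assert (HD : len J / 3 ^ m = 3 * third_len J m)
      by (unfold third_len; simpl; field; apply pow_nonzero; lra).
    assert (HDS : len J / 3 ^ S m = third_len J m) by reflexivity.
    split; [|eexists; split].
    + eapply is_RInt_Chasles_eq; [exact Bw | exact Tw |].
      unfold tail_mass; cbv zeta. rewrite HD, HDS. pose proof (pp_pos k hk).
      field. split; [apply pow_nonzero|]; lra.
    + eapply is_RInt_Chasles_eq; [exact Be | exact Te | reflexivity].
    + unfold tail_energy in *; cbv zeta in *. rewrite HD. rewrite HDS in Tv. lra.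
Qed.

End LevelS.

Lemma carrier_bounds_all k nu : (2 <= k)%nat -> carrier_bounds k nu.
Proof.
  intros hk. induction nu as [|nu IH]; intros C HC.
  - destruct (level0_integrals k C hk HC) as [Hw He]. split; [exact Hw|].
    eexists; split; [exact He|].
    pose proof (tau_ge k hk). pose proof (carries_len_pos _ _ _ HC).
    assert (0 < 2 ^ (nn k - 0)) by (apply pow_lt; lra).
    assert (0 < 2 ^ (nn k - 0) * len C) by (apply Rmult_lt_0_compat; lra).
    nra.
  - destruct (tail_integrals k nu C hk HC IH 0 ltac:(lia)) as [Hw [v [He Hv]]].
    rewrite sub_lo_0 in Hw, He. rewrite tail_mass_0 in Hw by exact hk.
    rewrite tail_energy_0 in Hv by exact hk.
    split; [exact Hw | exists v; split; [exact He | lra]].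
Qed.

Lemma tail_energy_le_mass k om J m : (2 <= k)%nat -> 0 < om -> len J > 0 ->
  (m <= k - 2)%nat -> tail_energy k om J m <= 30 * pp k ^ 2 * tail_mass k om J m.
Proof.
  intros hk Hom HL Hm. unfold tail_energy, tail_mass; cbv zeta.
  pose proof (pp_ge k hk). pose proof (tau_le k hk). pose proof (tau_ge k hk).
  pose proof (tail_coef_pos k).
  set (Q := len J / 3 ^ (k - 1)). set (s := len J / 3 ^ m - Q).
  assert (HQ : 0 < Q) by (apply Rdiv_lt_0_compat; [lra | apply pow3_pos]).
  assert (Hs : 2 * Q <= s).
  { assert (3 * Q <= len J / 3 ^ m); [|unfold s; lra].
    unfold Q. replace (k - 1)%nat with (S (k - 2)) by lia.
    replace (3 * (len J / 3 ^ S (k - 2))) with (len J / 3 ^ (k - 2))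
      by (simpl; field; apply pow_nonzero; lra).
    apply Rmult_le_compat_l; [lra|]. apply Rinv_le_contravar; [apply pow3_pos|].
    apply Rle_pow; [lra | lia]. }
  assert (Hmass : om * s <= om / pp k * (s / 2 + 2 * Q / 3 + tail_coef k * Q / 3) + om * s).
  { assert (0 <= om / pp k * (s / 2 + 2 * Q / 3 + tail_coef k * Q / 3)); [|lra].
    apply Rmult_le_pos; [apply Rdiv_le_0_compat|]; nra. }
  assert (Henergy : 4 * pp k * (s / 2 + 2 * Q / 3) + tau k * (s + Q / 3) <= 10 * pp k ^ 2 * s).
  { assert (4 * pp k * (s / 2 + 2 * Q / 3) <= 10 / 3 * pp k * s) by nra.
    assert (tau k * (s + Q / 3) <= tau k * (7 / 6 * s)) by (apply Rmult_le_compat_l; lra).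
    assert (tau k * (7 / 6 * s) <= (pp k + 6 * pp k ^ 2) * (7 / 6 * s))
      by (apply Rmult_le_compat_r; lra).
    assert (9 / 2 * pp k <= 3 * pp k ^ 2) by nra.
    assert (9 / 2 * pp k * s <= 3 * pp k ^ 2 * s) by (apply Rmult_le_compat_r; lra).
    nra. }
  assert (0 <= pp k ^ 2 * (om * s)) by (apply Rmult_le_pos; nra).
  apply Rle_trans with (30 * pp k ^ 2 * (om * s)).
  - replace (4 * om * pp k * (s / 2 + 2 * Q / 3) + tau k * om * (s + Q / 3))
      with (om * (4 * pp k * (s / 2 + 2 * Q / 3) + tau k * (s + Q / 3))) by ring.
    apply Rle_trans with (om * (10 * pp k ^ 2 * s)); [apply Rmult_le_compat_l|]; lra.
  - apply Rmult_le_compat_l; [nra | exact Hmass].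
Qed.

Lemma level0_tail_bound k J a : (2 <= k)%nat -> carries k 0 J -> lo J <= a <= hi J ->
  exists vf vg, is_RInt (wt2_sig k) a (hi J) vf /\ is_RInt (ww k) a (hi J) vg /\
                vf <= 30 * pp k ^ 2 * vg.
Proof.
  intros hk HJ Ha. destruct (level0_integrals k J hk HJ) as [Hw He].
  assert (Ew : ex_RInt (ww k) a (hi J))
    by (apply (ex_RInt_Chasles_2 (V := R_CompleteNormedModule) _ (lo J)); [lra | eexists; eauto]).
  assert (Ee : ex_RInt (wt2_sig k) a (hi J))
    by (apply (ex_RInt_Chasles_2 (V := R_CompleteNormedModule) _ (lo J)); [lra | eexists; eauto]).
  exists (RInt (wt2_sig k) a (hi J)), (RInt (ww k) a (hi J)).
  split; [exact (RInt_correct _ _ _ Ee) | split; [exact (RInt_correct _ _ _ Ew)|]].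
  apply (is_RInt_le (wt2_sig k) (fun x => 30 * pp k ^ 2 * ww k x) a (hi J)); [lra | exact (RInt_correct _ _ _ Ee) | |].
  - exact (is_RInt_scal (ww k) a (hi J) (30 * pp k ^ 2) _ (RInt_correct _ _ _ Ew)).
  - intros x Hx. apply (wt2_sig_level0_le k J hk HJ x). unfold mem; lra.
Qed.

Lemma RiemannInt_le_of_is_RInt (f g : R -> R) a b vf vg C :
  is_RInt f a b vf -> is_RInt g a b vg -> vf <= C * vg ->
  exists (pr1 : Riemann_integrable f a b) (pr2 : Riemann_integrable g a b),
    RiemannInt pr1 <= C * RiemannInt pr2.
Proof.
  intros Hf Hg HC.
  assert (Ef : ex_RInt f a b) by (exists vf; exact Hf).
  assert (Eg : ex_RInt g a b) by (exists vg; exact Hg).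
  exists (ex_RInt_Reals_0 _ _ _ Ef), (ex_RInt_Reals_0 _ _ _ Eg).
  rewrite <- !RInt_Reals, (is_RInt_unique _ _ _ _ Hf), (is_RInt_unique _ _ _ _ Hg).
  exact HC.
Qed.

Theorem proposition4 (k : nat) (hk : (2 <= k)%nat) (l : nat) (hl : (l <= nn k)%nat)
  (I : intv) (hI : carries k (nn k - l) I) (m : nat) (hm : (m <= k - 2)%nat) :
  exists (pr1 : Riemann_integrable (fun x => wt k x ^ 2 * sig k x)
                                   (lo (Isub I m)) (hi (Isub I m)))
         (pr2 : Riemann_integrable (ww k) (lo (Isub I m)) (hi (Isub I m))),
    RiemannInt pr1 <= 30 * pp k ^ 2 * RiemannInt pr2.
Proof.
  pose proof (carries_len_pos _ _ _ hI) as HL.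
  change (lo (Isub I m)) with (sub_lo I m). change (hi (Isub I m)) with (hi I).
  change (fun x => wt k x ^ 2 * sig k x) with (wt2_sig k).
  destruct (nn k - l)%nat as [|nu].
  - destruct (level0_tail_bound k I (sub_lo I m) hk hI) as [vf [vg [Hf [Hg Hv]]]].
    + pose proof (lo_le_sub_lo I HL m). pose proof (sub_lo_lt_hi I HL m). lra.
    + exact (RiemannInt_le_of_is_RInt _ _ _ _ _ _ _ Hf Hg Hv).
  - assert (Hom : 0 < 2 ^ (nn k - S nu)) by (apply pow_lt; lra).
    destruct (tail_integrals k nu I hk hI (carrier_bounds_all k nu hk) m ltac:(lia))
      as [Hg [vf [Hf Hv]]].
    apply (RiemannInt_le_of_is_RInt _ _ _ _ _ _ _ Hf Hg).
    pose proof (tail_energy_le_mass k _ I m hk Hom HL hm). lra.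
Qed.
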